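(* Assume the Hashimoto matrix $B$ is irreducible. Let $\mathbf{p}:[0,1]\to(0,1]^E$ be continuous and set $\rho(\lambda):=\rho\big(B^T\mathrm{diag}(\mathbf{p}(\lambda))\big)$. Suppose a continuous phase transition occurs at $\lambda_c\in[0,1)$, i.e. $\mathbf{Q}(\mathbf{p}(\lambda))\to\mathbf{1}$ as $\lambda\to\lambda_c$, and there is a sequence $\lambda_n\to\lambda_c$ with $\mathbf{Q}(\mathbf{p}(\lambda_n))\neq\mathbf{1}$ for all $n$. Then $\rho(\lambda_c)=1$.
   Context: $\mathcal{G}=(V,E)$ is a finite directed graph, edges written $i\to j$, $M=|E|$; $\mathcal{N}^-(j)=\{k:\,k\to j\in E\}$. The Hashimoto matrix is $B_{i\to j,\,k\to l}=\delta_{jk}(1-\delta_{il})$; it is irreducible iff the directed graph on $E$ with an arc from $e$ to $e'$ whenever $B_{e,e'}\neq 0$ is strongly connected. $\rho$ denotes spectral radius. For $\mathbf{p}\in[0,1]^E$ define $\mathbf{F}(\cdot;\mathbf{p}):[0,1]^E\to[0,1]^E$ componentwise: for the edge $j\to i$, $$F_{j\to i}(\mathbf{y};\mathbf{p})=\prod_{k\in\mathcal{N}^-(j)\setminus\{i\}}\big(1-p_{k\to j}+p_{k\to j}\,y_{k\to j}\big)$$ (empty product $=1$), so that $\mathbf{F}'(\mathbf{1};\mathbf{p})=B^T\mathrm{diag}(\mathbf{p})$. $\mathbf{Q}(\mathbf{p})$ denotes the componentwise smallest fixed point of $\mathbf{F}(\cdot;\mathbf{p})$ in $[0,1]^E$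 (limit of iterates of $\mathbf{F}$ from $\mathbf{0}$). *)

From HB Require Import structures.
From mathcomp Require Import all_boot all_order all_algebra.
From mathcomp Require Import all_classical all_reals all_analysis.
From mathcomp Require Import complex.

Set Implicit Arguments.
Unset Strict Implicit.
Unset Printing Implicit Defensive.

Import Order.TTheory GRing.Theory Num.Theory.
Import numFieldNormedType.Exports.
Local Open Scope ring_scope.
Local Open Scope classical_set_scope.

(* A finite directed graph: vertex finType V and an edge relation G
   (i -> j is an edge iff G i j).  Edges are the elements of the finite
   subtype [edge G]; an edge a has tail (a).1 and head (a).2. *)
Definition edge_pred (V : finType) (G : rel V) : pred (V * V) :=
  fun x => G x.1 x.2.
Definition edge (V : finType) (G : rel V) := {x | edge_pred G x}.
HB.instance Definition _ (V : finType) (G : rel V) :=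
  Finite.copy (edge G) {x | edge_pred G x}.

Section Defs.
Variables (R : realType) (V : finType) (G : rel V).
Local Notation E := (edge G).

Definition etail (a : E) : V := (val a).1.
Definition ehead (a : E) : V := (val a).2.

(* Hashimoto matrix entry B_{i->j, k->l} = delta_{jk} (1 - delta_{il}) *)
Definition hashimoto (a b : E) : R :=
  ((ehead a == etail b) && (etail a != ehead b))%:R.

(* B is irreducible iff the digraph on E with an arc e -> e' whenever
   B_{e,e'} <> 0 is strongly connected. *)
Definition hashimoto_irreducible : Prop :=
  forall a b : E, connect (fun e e' : E => hashimoto e e' != 0) a b.

(* The matrix B^T diag(p), indexed by 'I_#|E| via the enumeration of E. *)
Definition BTdiag (p : E -> R) : 'M[R]_#|{: E}| :=
  \matrix_(i, j) (hashimoto (enum_val j) (enum_val i) * p (enum_val j)).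

Definition cmod (z : R[i]) : R := Num.sqrt (complex.Re z ^+ 2 + complex.Im z ^+ 2).

Definition spectral_radius (n : nat) (A : 'M[R]_n) : R :=
  sup [set r : R | exists z : R[i],
         root (char_poly (map_mx (fun x : R => x%:C%C) A)) z /\ r = cmod z].

(* F(y; p), componentwise: for the edge a = j -> i,
   F_a(y;p) = prod_{k in N^-(j) \ {i}} (1 - p_{k->j} + p_{k->j} y_{k->j}) *)
Definition Fmap (p : E -> R) (y : E -> R) : E -> R :=
  fun a => \prod_(b : E | (ehead b == etail a) && (etail b != ehead a))
             (1 - p b + p b * y b).

(* Q(p): the componentwise smallest fixed point of F(.;p) in [0,1]^E,
   realised as the limit of the iterates of F(.;p) started from 0. *)
Definition Qfix (p : E -> R) : E -> R :=
  fun a => lim ((fun n : nat => iter n (Fmap p) (fun _ => 0) a) @ \oo).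

End Defs.

(* Write A(q) := B^T diag(q) and u_m := 1 - x_m, where x_m is the m-th iterate
   of F(.;q) started from 0, so that Q(q) = lim x_m.  Two comparison facts
   between F and its linearisation A(q) at 1 drive the proof:
   - (linear bound) 1 - F(y) <= A(q) (1 - y), hence u_{m+k} <= A(q)^k u_m;
   - (quadratic bound) F(y) <= 1 - s + s^2 with s = A(q)(1 - y).
   If rho(A(q0)) < 1, the powers of A(q0) tend to 0 (Cayley-Hamilton over
   the complex numbers), so for every q <= (1 + eta) q0 some power A(q)^K is
   a contraction; the deficits u_m then decay geometrically and Q(q) = 1.
   If rho(A(q0)) > 1, an eigenvector of modulus > 1 yields w >= 0, w <> 0,
   with c w <= A(q0) w for some c > 1; for every q >= (1 - eta) q0 the
   vector 1 - eps w is a supersolution of F(.;q), so Q(q) <= 1 - eps w.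
   By continuity of p, the first case contradicts Q(p(lambda_n)) <> 1 for
   lambda_n near lambda_c, and the second contradicts Q(p(lambda)) -> 1 for
   lambda > lambda_c near lambda_c. *)
From HB Require Import structures.
From mathcomp Require Import all_boot all_order all_algebra.
From mathcomp Require Import all_classical all_reals all_analysis.
From mathcomp Require Import complex.
From mathcomp Require Import ring lra zify.
Import Order.TTheory GRing.Theory Num.Theory.
Import numFieldNormedType.Exports.
Local Open Scope ring_scope.
Local Open Scope classical_set_scope.
Set Implicit Arguments.
Unset Strict Implicit.

Section Vanishing.
Variable R : realType.

Definition vanishing (a : nat -> R) :=
  forall e : R, 0 < e -> exists N, forall k, (N <= k)%N -> a k <= e.

Lemma vanishing_geometric (r : R) : 0 <= r < 1 -> vanishing (fun k => r ^+ k).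
Proof.
case/andP=> r0 r1 e e0.
have : `|r| < 1 by rewrite ger0_norm.
move/cvg_expr/cvgrPdist_le/(_ e e0) => [N _ HN]; exists N => k Hk.
by have := HN k Hk; rewrite /= sub0r normrN ger0_norm ?exprn_ge0.
Qed.

Lemma vanishing_perturbed_contraction (a b : nat -> R) (r : R) :
  (forall k, 0 <= a k) -> 0 <= r < 1 ->
  (forall k, a k.+1 <= r * a k + b k) -> vanishing b -> vanishing a.
Proof.
move=> a0 /andP[r0 r1] hrec vb e e0.
have e2 : 0 < e * (1 - r) / 2 by rewrite divr_gt0 // mulr_gt0 // subr_gt0.
have [N HN] := vb _ e2.
have unrolled : forall m, a (N + m)%N <= r ^+ m * a N + e / 2.
  elim=> [|m IH]; first by rewrite addn0 expr0 mul1r lerDl; lra.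
  rewrite addnS; apply: (le_trans (hrec _)).
  have hb := HN (N + m)%N (leq_addr _ _).
  have : r * a (N + m)%N <= r * (r ^+ m * a N + e / 2) by rewrite ler_wpM2l.
  rewrite exprS -mulrA; lra.
have [aN0|aNp] := eqVneq (a N) 0.
  exists N => k Hk; rewrite -(subnKC Hk); apply: (le_trans (unrolled _)).
  rewrite aN0 mulr0 add0r; lra.
have aN_gt0 : 0 < a N by rewrite lt0r aNp a0.
have [M HM] := @vanishing_geometric r (ltac:(by rewrite r0 r1)) (e / 2 / a N)
  (ltac:(by rewrite !divr_gt0)).
exists (N + M)%N => k Hk; have NM := leq_trans (leq_addr M N) Hk.
rewrite -(subnKC NM); apply: (le_trans (unrolled _)).
have : r ^+ (k - N) <= e / 2 / a N by apply: HM; rewrite leq_subRL.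
rewrite ler_pdivlMr // => h; lra.
Qed.

Lemma vanishing_uniform (I : finType) (a : I -> nat -> R) :
  (forall i, vanishing (a i)) -> forall e, 0 < e ->
  exists N, forall i k, (N <= k)%N -> a i k <= e.
Proof.
move=> ha e e0.
have /choice [f hf] : forall i, exists N, forall k, (N <= k)%N -> a i k <= e.
  by move=> i; apply: ha.
exists (\max_i f i) => i k hk; apply: hf; apply: leq_trans hk.
exact: leq_bigmax.
Qed.

End Vanishing.

Section ComplexMatrixPowers.
Variable R : realType.
Local Notation C := (R[i]).
Local Notation normc := (@Normc.normc R).

Lemma normc_ge0 (z : C) : 0 <= normc z.
Proof. by case: z => a b; rewrite /Normc.normc sqrtr_ge0. Qed.

Lemma normc_sum (I : Type) (r : seq I) (P : pred I) (F : I -> C) :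
  normc (\sum_(i <- r | P i) F i) <= \sum_(i <- r | P i) normc (F i).
Proof.
elim/big_rec2: _ => [|i y1 y2 _ hy]; first by rewrite Normc.normc0.
by apply: le_trans (le_normcD _ _) _; rewrite lerD2l.
Qed.

Lemma normc_real (a : R) : normc (a%:C%C) = `|a|.
Proof. by rewrite /Normc.normc /= expr0n /= addr0 sqrtr_sqr. Qed.

Variable n : nat.

Definition mx_vanishing (X : nat -> 'M[C]_n) :=
  forall i j, vanishing (fun k => normc (X k i j)).

(* If (A - z) A^k M vanishes and |z| < 1, then so does A^k M: writing
   W_k = A^k M, we have W_{k+1} = z W_k + (A - z) W_k.  Iterating this over
   the roots of a polynomial annihilating A removes one factor at a time. *)
Lemma mx_vanishing_peel (A : 'M[C]_n) (s : seq C) :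
  (forall z, z \in s -> normc z < 1) ->
  forall M : 'M[C]_n,
  mx_vanishing (fun k => (\prod_(z <- s) (A - z%:M)) *m (A ^+ k *m M)) ->
  mx_vanishing (fun k => A ^+ k *m M).
Proof.
elim: s => [|z s IH] hs M.
  by rewrite big_nil; under eq_fun do rewrite mul1mx.
move=> H; apply: IH; first by move=> w ws; apply: hs; rewrite inE ws orbT.
set W := fun k => _.
have W_succ : forall k, W k.+1 = A *m W k.
  move=> k; rewrite /W exprS -mulmxA mulmxA.
  have cA : GRing.comm A (\prod_(z0 <- s) (A - z0%:M)).
    apply: commr_prod => w _; rewrite /GRing.comm mulrBr mulrBl.
    by rewrite -[A * w%:M]/(A *m w%:M) -[w%:M * A]/(w%:M *m A) scalar_mxC.
  rewrite [RHS]mulmxA; congr (_ *m _); exact: (esym cA).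
move=> i j.
have hz : 0 <= normc z < 1 by rewrite normc_ge0 hs // mem_head.
apply: (vanishing_perturbed_contraction (r := normc z)
          (b := fun k => normc (((A - z%:M) *m W k) i j))) => //.
- by move=> k; apply: normc_ge0.
- move=> k.
  have -> : W k.+1 i j = z * W k i j + ((A - z%:M) *m W k) i j.
    by rewrite mulmxBl W_succ mul_scalar_mx !mxE; ring.
  by rewrite -Normc.normcM; exact: le_normcD.
- have := H i j; congr vanishing; apply: funext => k; rewrite big_cons /W.
  by rewrite -[_ * _]/(_ *m _) -mulmxA.
Qed.

End ComplexMatrixPowers.

(* If all roots of the characteristic polynomial lie in the open unit disc,
   the powers of A tend to 0 (Cayley-Hamilton and the peeling lemma). *)
Lemma mx_powers_vanishing (R : realType) n (A : 'M[R[i]]_n) :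
  (forall z, root (char_poly A) z -> Normc.normc z < 1) ->
  mx_vanishing (fun k => A ^+ k).
Proof.
case: n A => [|n] A hroots; first by move=> [].
have [rs hrs] := closed_field_poly_normal (char_poly A).
move: hrs; rewrite (monicP (char_poly_monic A)) scale1r => hrs.
have annihilate : \prod_(z <- rs) (A - z%:M) = 0.
  rewrite -(Cayley_Hamilton A) hrs rmorph_prod; apply: eq_bigr => z _.
  by rewrite rmorphB /= horner_mx_X horner_mx_C.
have -> : (fun k => A ^+ k) = (fun k => A ^+ k *m 1).
  by apply: funext => k; rewrite mulmx1.
apply: (mx_vanishing_peel (s := rs)).
- by move=> z zs; apply: hroots; rewrite hrs root_prod_XsubC.
- rewrite annihilate => i j e e0; exists 0%N => k _.
  by rewrite mul0mx mxE Normc.normc0 ltW.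
Qed.

Lemma char_poly_trmx (R : comNzRingType) n (M : 'M[R]_n) :
  char_poly M^T = char_poly M.
Proof.
rewrite /char_poly -det_tr; congr (\det _); apply/matrixP => i j.
by rewrite !mxE eq_sym.
Qed.

Section SpectralRadius.
Variables (R : realType) (n : nat) (A : 'M[R]_n).
Local Notation Ac := (map_mx (fun x : R => x%:C%C) A).
Local Notation spectrum_moduli := [set r : R | exists z : R[i],
         root (char_poly Ac) z /\ r = cmod z].

Lemma cmodE (z : R[i]) : cmod z = Normc.normc z.
Proof. by case: z. Qed.

(* The moduli of the eigenvalues are bounded by their sum. *)
Lemma spectrum_moduli_has_sup :
  (exists z, root (char_poly Ac) z) -> has_sup spectrum_moduli.
Proof.
move=> [z hz]; split; first by exists (cmod z), z.
have [rs hrs] := closed_field_poly_normal (char_poly Ac).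
move: hrs; rewrite (monicP (char_poly_monic Ac)) scale1r => hrs.
exists (\sum_(w <- rs) cmod w) => _ [w [hw ->]].
move: hw; rewrite hrs root_prod_XsubC => ws.
rewrite (big_rem w ws) /= lerDl sumr_ge0 // => x _.
by rewrite cmodE normc_ge0.
Qed.

Lemma spectral_radius_lt1_powers_vanishing : spectral_radius A < 1 ->
  forall i j, vanishing (fun k => `|(A ^+ k) i j|).
Proof.
move=> hs i j.
have hv : mx_vanishing (fun k => Ac ^+ k).
  apply: mx_powers_vanishing => z hz.
  have hS := spectrum_moduli_has_sup (ex_intro _ z hz).
  rewrite -cmodE; apply: le_lt_trans hs.
  by apply: sup_upper_bound => //; exists z.
have Ac_pow : forall k, Ac ^+ k = map_mx (fun x : R => x%:C%C) (A ^+ k).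
  elim=> [|k IH]; first by rewrite !expr0 map_mx1.
  by rewrite !exprS IH; apply: esym; exact: map_mxM.
have := hv i j; congr vanishing; apply: funext => k.
by rewrite Ac_pow mxE normc_real.
Qed.

Lemma spectral_radius_gt1_root : 1 < spectral_radius A ->
  exists z : R[i], root (char_poly Ac) z /\ 1 < cmod z.
Proof.
move=> hs.
have [[z hz]|noroot] := pselect (exists z, root (char_poly Ac) z); last first.
  have S0 : spectrum_moduli = set0.
    by apply/seteqP; split => // x [z [hz _]]; apply: noroot; exists z.
  by move: hs; rewrite /spectral_radius S0 sup0 ltr10.
have hS := spectrum_moduli_has_sup (ex_intro _ z hz).
have [_ [w [hw ->]] hlt] := sup_adherent
  (ltac:(by rewrite subr_gt0) : 0 < spectral_radius A - 1) hS.
by exists w; split => //; move: hlt; rewrite opprB addrC subrK.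
Qed.

(* A nonnegative matrix of spectral radius > 1 has a nonzero nonnegative
   vector w with c w <= A w for some c > 1: take the moduli of the entries of
   an eigenvector for an eigenvalue of modulus c. *)
Lemma subinvariant_vector : (forall i j, 0 <= A i j) -> 1 < spectral_radius A ->
  exists c : R, exists w : 'I_n -> R,
    [/\ 1 < c, forall j, 0 <= w j, exists j, 0 < w j &
        forall i, c * w i <= \sum_j A i j * w j].
Proof.
move=> A0 /spectral_radius_gt1_root [z [hz hz1]].
have : eigenvalue Ac^T z by rewrite eigenvalue_root_char char_poly_trmx.
move=> /eigenvalueP [v hv v0].
exists (cmod z), (fun j => Normc.normc (v 0 j)); split => //.
- by move=> j; apply: normc_ge0.
- have [j hj] : exists j, v 0 j != 0.
    apply/existsP; move: v0; apply: contraR; rewrite negb_exists => /forallP h.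
    by apply/eqP/rowP => j; rewrite mxE; apply/eqP; have := h j; rewrite negbK.
  exists j; rewrite lt0r normc_ge0 andbT; apply/eqP => h0; move/eqP: hj; apply.
  exact: Normc.eq0_normc.
- move=> i; move/rowP: hv => /(_ i); rewrite !mxE => e.
  rewrite cmodE -Normc.normcM -e.
  apply: le_trans (normc_sum _ _ _) _; apply: ler_sum => j _.
  by rewrite !mxE Normc.normcM normc_real ger0_norm // mulrC.
Qed.

End SpectralRadius.

Section NonnegativeMatrices.
Variables (R : realType) (n : nat).

Lemma mx_pow_ge0 (A : 'M[R]_n) : (forall i j, 0 <= A i j) ->
  forall k i j, 0 <= (A ^+ k) i j.
Proof.
move=> hA; elim=> [|k IH] i j; first by rewrite expr0 mxE ler0n.
by rewrite exprS mxE sumr_ge0 // => l _; rewrite mulr_ge0.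
Qed.

Lemma mx_pow_le (A B : 'M[R]_n) (c : R) : 0 <= c ->
  (forall i j, 0 <= A i j) -> (forall i j, A i j <= c * B i j) ->
  forall k i j, (A ^+ k) i j <= c ^+ k * (B ^+ k) i j.
Proof.
move=> c0 hA hAB; elim=> [|k IH] i j; first by rewrite !expr0 mul1r.
rewrite !exprS !mxE mulr_sumr; apply: ler_sum => l _.
apply: le_trans (ler_pM (hA i l) (mx_pow_ge0 hA k l j) (hAB i l) (IH l j)) _.
by rewrite mulrACA.
Qed.

Lemma mulmx_ge0_mono (A : 'M[R]_n) (v w : 'cV[R]_n) : (forall i j, 0 <= A i j) ->
  (forall j, v j 0 <= w j 0) -> forall i, (A *m v) i 0 <= (A *m w) i 0.
Proof.
move=> hA hvw i; rewrite !mxE; apply: ler_sum => j _.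
by rewrite ler_wpM2l.
Qed.

End NonnegativeMatrices.

Lemma expr_small_le (R : realFieldType) (eta : R) (K : nat) : 0 <= eta ->
  2 * K%:R * eta <= 1 -> (1 + eta) ^+ K <= 1 + 2 * K%:R * eta.
Proof.
move=> e0; elim: K => [|k IH] hk; first by rewrite expr0 mulr0 mul0r addr0.
have hk' : 2 * k%:R * eta <= 1.
  by apply: le_trans hk; rewrite ler_wpM2r // ler_wpM2l // ler_nat.
have := IH hk'; rewrite exprS -natr1 => h.
have : (1 + eta) * (1 + eta) ^+ k <= (1 + eta) * (1 + 2 * k%:R * eta).
  by rewrite ler_wpM2l //; lra.
move: hk; rewrite -natr1; nra.
Qed.

Lemma prod_one_minus_bounds (R : realFieldType) (I : Type) (r : seq I)
    (P : pred I) (t : I -> R) :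
  (forall i, P i -> 0 <= t i <= 1) ->
  [/\ 0 <= \prod_(i <- r | P i) (1 - t i) <= 1,
      1 - \prod_(i <- r | P i) (1 - t i) <= \sum_(i <- r | P i) t i &
      \prod_(i <- r | P i) (1 - t i) <=
        1 - \sum_(i <- r | P i) t i + (\sum_(i <- r | P i) t i) ^+ 2].
Proof.
move=> ht.
suff : 0 <= \sum_(i <- r | P i) t i /\
  [/\ 0 <= \prod_(i <- r | P i) (1 - t i) <= 1,
      1 - \prod_(i <- r | P i) (1 - t i) <= \sum_(i <- r | P i) t i &
      \prod_(i <- r | P i) (1 - t i) <=
        1 - \sum_(i <- r | P i) t i + (\sum_(i <- r | P i) t i) ^+ 2] by case.
elim/big_rec2: _ => [|i S Pr Pi [S0 [/andP[Pr0 Pr1] h4 h5]]].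
  by rewrite expr0n /=; split => //; split => //; lra.
have /andP[t0 t1] := ht i Pi.
split; first lra.
split.
- apply/andP; split; nra.
- have : t i * Pr <= t i by rewrite ler_piMr.
  nra.
- have : (1 - t i) * Pr <= (1 - t i) * (1 - S + S ^+ 2).
    by rewrite ler_wpM2l // subr_ge0.
  have : 0 <= t i * S * (1 + S) by rewrite mulr_ge0 ?mulr_ge0 //; lra.
  rewrite expr2; nra.
Qed.

Section MessagePassing.
Variables (R : realType) (V : finType) (G : rel V).
Local Notation E := (edge G).
Local Notation n := #|{: E}|.

(* b = k -> j feeds a = j -> i in the non-backtracking walk: B_{b,a} = 1. *)
Definition feeds (b a : E) : bool := (ehead b == etail a) && (etail b != ehead a).

Definition in01 (y : E -> R) := forall b, 0 <= y b <= 1.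

Lemma in01_ge0 (y : E -> R) : in01 y -> forall b, 0 <= y b.
Proof. by move=> hy b; have /andP[] := hy b. Qed.

Lemma BTdiag_ge0 (q : E -> R) : (forall b, 0 <= q b) -> forall i j, 0 <= BTdiag q i j.
Proof. by move=> hq i j; rewrite mxE mulr_ge0 // /hashimoto ler0n. Qed.

Variable q : E -> R.
Hypothesis q01 : in01 q.

Lemma Fmap_deficitE (y : E -> R) a :
  Fmap q y a = \prod_(b | feeds b a) (1 - q b * (1 - y b)).
Proof. by apply: eq_bigr => b _; ring. Qed.

Lemma deficit_term01 (y : E -> R) b : in01 y -> 0 <= q b * (1 - y b) <= 1.
Proof.
move=> hy; have := hy b; have := q01 b => /andP[? ?] /andP[? ?].
apply/andP; split; nra.
Qed.

Lemma Fmap_bounds (y : E -> R) a : in01 y ->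
  [/\ 0 <= Fmap q y a <= 1,
      1 - Fmap q y a <= \sum_(b | feeds b a) q b * (1 - y b) &
      Fmap q y a <= 1 - \sum_(b | feeds b a) q b * (1 - y b) +
                      (\sum_(b | feeds b a) q b * (1 - y b)) ^+ 2].
Proof.
move=> hy; rewrite Fmap_deficitE.
exact: prod_one_minus_bounds (fun b _ => deficit_term01 b hy).
Qed.

Lemma Fmap_in01 (y : E -> R) : in01 y -> in01 (Fmap q y).
Proof. by move=> hy a; have [] := Fmap_bounds a hy. Qed.

Lemma Fmap_mono (y y' : E -> R) : in01 y -> in01 y' ->
  (forall b, y b <= y' b) -> forall a, Fmap q y a <= Fmap q y' a.
Proof.
move=> hy hy' hyy a; apply: ler_prod => b _.
have := hy b; have := hy' b; have := q01 b; have := hyy b.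
move=> ? /andP[? ?] /andP[? ?] /andP[? ?].
apply/andP; split; nra.
Qed.

Lemma feeds_sumE (u : E -> R) a :
  \sum_(b | feeds b a) q b * u b =
  \sum_(j < n) BTdiag q (enum_rank a) j * u (enum_val j).
Proof.
rewrite big_mkcond /= (big_enum_val (A := {: E})) /=.
apply: eq_bigr => j _; rewrite mxE enum_rankK /hashimoto -/(feeds _ _).
by case: (feeds _ _); rewrite ?mul1r ?mul0r.
Qed.

Definition iterate (m : nat) : E -> R := iter m (Fmap q) (fun _ => 0).

Lemma iterate_in01 m : in01 (iterate m).
Proof.
elim: m => [|m IH]; first by move=> b; rewrite /iterate /= lexx ler01.
by rewrite /iterate iterS; apply: Fmap_in01.
Qed.

Lemma iterate_mono m a : iterate m a <= iterate m.+1 a.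
Proof.
elim: m a => [|m IH] a; first by have /andP[] := iterate_in01 1 a.
rewrite /iterate !iterS.
by apply: Fmap_mono; [exact: iterate_in01|exact: (iterate_in01 m.+1)|exact: IH].
Qed.

Lemma Qfix_le_supersolution (y : E -> R) :
  in01 y -> (forall a, Fmap q y a <= y a) -> forall a, Qfix q a <= y a.
Proof.
move=> hy hF.
have below : forall m a, iterate m a <= y a.
  elim=> [|m IH] a; first by have /andP[] := hy a.
  rewrite /iterate iterS; apply: le_trans (hF a).
  by apply: Fmap_mono => //; exact: iterate_in01.
move=> a; rewrite /Qfix.
have hc := @nondecreasing_cvgn R (fun m => iterate m a) _ _.
rewrite (cvg_lim (@Rhausdorff R) (hc _ _)).
- apply: ge_sup; first by exists (iterate 0 a), 0%N.
  by move=> _ [m _ <-]; apply: below.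
- by apply/nondecreasing_seqP => m; apply: iterate_mono.
- by exists 1 => _ [m _ <-]; have /andP[] := iterate_in01 m a.
Qed.

Definition deficit (m : nat) : 'cV[R]_n := \col_j (1 - iterate m (enum_val j)).

Lemma deficit_ge0 m j : 0 <= deficit m j 0.
Proof. by rewrite mxE subr_ge0; have /andP[] := iterate_in01 m (enum_val j). Qed.

Lemma deficit_pow m k i :
  deficit (m + k) i 0 <= (BTdiag q ^+ k *m deficit m) i 0.
Proof.
elim: k i => [|k IH] i; first by rewrite addn0 expr0 mul1mx.
rewrite addnS {1}/deficit mxE /iterate iterS -/(iterate _).
have [_ lin _] := Fmap_bounds (enum_val i) (iterate_in01 (m + k)).
apply: le_trans lin _.
rewrite feeds_sumE enum_valK exprS -mulmxA.
apply: le_trans (mulmx_ge0_mono (BTdiag_ge0 (in01_ge0 q01)) IH i).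
by rewrite mxE; apply: ler_sum => j _; rewrite !mxE.
Qed.

End MessagePassing.

Section Subcritical.
Variables (R : realType) (V : finType) (G : rel V).
Local Notation E := (edge G).
Local Notation n := #|{: E}|.

Lemma BTdiag_le (q q0 : E -> R) (c : R) : (forall b, q b <= c * q0 b) ->
  forall i j, BTdiag q i j <= c * BTdiag q0 i j.
Proof. by move=> hq i j; rewrite !mxE mulrCA ler_wpM2l // /hashimoto ler0n. Qed.

Lemma deficit_contraction (q : E -> R) (q01 : in01 q) (K : nat) (kappa c : R)
    (m : nat) :
  (forall i j, (BTdiag q ^+ K) i j <= kappa) -> (forall j, deficit q m j 0 <= c) ->
  forall i, deficit q (m + K) i 0 <= n%:R * kappa * c.
Proof.
move=> hK hc i; apply: le_trans (deficit_pow q01 m K i) _; rewrite mxE.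
have termwise j : (BTdiag q ^+ K) i j * deficit q m j 0 <= kappa * c.
  exact: ler_pM (mx_pow_ge0 (BTdiag_ge0 (in01_ge0 q01)) K i j) (deficit_ge0 q01 m j)
    (hK i j) (hc j).
apply: le_trans (ler_sum _ (fun j _ => termwise j)) _.
by rewrite sumr_const card_ord -mulrA mulr_natl.
Qed.

Lemma Qfix_one_of_contraction (q : E -> R) (q01 : in01 q) (K : nat) (theta : R) :
  0 <= theta < 1 ->
  (forall m c, 0 <= c -> (forall j, deficit q m j 0 <= c) ->
     forall i, deficit q (m + K) i 0 <= theta * c) ->
  Qfix q = (fun _ => 1).
Proof.
move=> theta01 contract.
have geometric : forall Q r i, deficit q (Q * K + r) i 0 <= theta ^+ Q.
  elim=> [|Q IH] r i.
    rewrite mul0n add0n expr0 mxE lerBlDr lerDl.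
    by have /andP[] := iterate_in01 q01 r (enum_val i).
  have -> : (Q.+1 * K + r = (Q * K + r) + K)%N by rewrite mulSn; lia.
  by rewrite exprS; apply: contract => //; rewrite exprn_ge0 //; case/andP: theta01.
apply: funext => a; apply: (cvg_lim (@Rhausdorff R)).
apply/cvgrPdist_le => e e0.
have [Q0 hQ0] := vanishing_geometric theta01 e0.
exists (Q0 * K)%N => // m /= hm.
have := geometric Q0 (m - Q0 * K)%N (enum_rank a); rewrite subnKC //.
have := deficit_ge0 q01 m (enum_rank a).
rewrite mxE enum_rankK => hu hle.
by rewrite ger0_norm //; apply: le_trans hle _; exact: hQ0.
Qed.

Lemma subcritical_Qfix_one (q0 : E -> R) : (forall b, 0 <= q0 b) ->
  (forall i j, vanishing (fun k => `|(BTdiag q0 ^+ k) i j|)) ->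
  exists2 eta : R, 0 < eta & forall q : E -> R, in01 q ->
    (forall b, q b <= (1 + eta) * q0 b) -> Qfix q = (fun _ => 1).
Proof.
move=> hq0 hv.
pose kappa : R := 1 / (2 * (n%:R + 1)).
have kappa0 : 0 < kappa by rewrite divr_gt0 // mulr_gt0 // ltr_wpDl.
have [K hK] := vanishing_uniform
  (a := fun ij : 'I_n * 'I_n => fun k => `|(BTdiag q0 ^+ k) ij.1 ij.2|)
  (fun ij => hv ij.1 ij.2) kappa0.
pose eta : R := 1 / (8 * (K%:R + 1)).
have eta0 : 0 < eta by rewrite divr_gt0 // mulr_gt0 // ltr_wpDl.
exists eta => // q q01 hq.
have growth : (1 + eta) ^+ K <= 5 / 4.
  have small : 2 * K%:R * eta <= 1 / 4.
    rewrite /eta mulrA ler_pdivrMr ?mulr_gt0 ?ltr_wpDl // mul1r; nra.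
  by apply: le_trans (expr_small_le (ltW eta0) _) _; lra.
have AK_small : forall i j, (BTdiag q ^+ K) i j <= 5 / 4 * kappa.
  move=> i j.
  have A0K : (BTdiag q0 ^+ K) i j <= kappa.
    have := hK (i, j) K (leqnn K).
    by rewrite /= ger0_norm // (mx_pow_ge0 (BTdiag_ge0 hq0)).
  have Aq_ge0 := BTdiag_ge0 (in01_ge0 q01).
  apply: le_trans (mx_pow_le _ Aq_ge0 (BTdiag_le hq) K i j) _.
    by rewrite addr_ge0 // ltW.
  apply: ler_pM => //; first by rewrite exprn_ge0 // addr_ge0 // ltW.
  exact: mx_pow_ge0 (BTdiag_ge0 hq0) _ _ _.
apply: (Qfix_one_of_contraction q01 (K := K) (theta := 5 / 8)).
  by apply/andP; split; lra.
move=> m c c0 hc i; apply: le_trans (deficit_contraction q01 AK_small hc i) _.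
have n_ratio : n%:R * kappa <= 1 / 2.
  rewrite /kappa mulrA ler_pdivrMr ?mulr_gt0 ?ltr_wpDl // mulr1; nra.
by rewrite mulrA ler_wpM2r //; nra.
Qed.

End Subcritical.

Section Supercritical.
Variables (R : realType) (V : finType) (G : rel V).
Local Notation E := (edge G).
Local Notation n := #|{: E}|.

(* If c w <= A(q) w with c > 1 and w >= 0, then y = 1 - eps w is a
   supersolution of F(.;q) for eps small: by the quadratic bound,
   F(y) <= 1 - s + s^2 with s = eps A(q) w, and s^2 <= (1 - 1/c) s. *)
Lemma Qfix_le_of_subinvariant (q : E -> R) (q01 : in01 q) (w : 'I_n -> R)
    (c eps : R) :
  1 < c -> 0 < eps -> (forall j, 0 <= w j) ->
  eps * \sum_j w j <= 1 - c^-1 ->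
  (forall i, c * w i <= \sum_j BTdiag q i j * w j) ->
  forall a, Qfix q a <= 1 - eps * w (enum_rank a).
Proof.
move=> c1 eps0 w0 eps_small subinv.
have c0 : 0 < c := lt_trans ltr01 c1.
have ic0 : 0 < c^-1 by rewrite invr_gt0.
have icc : c^-1 * c = 1 by rewrite mulVf // gt_eqF.
pose W := \sum_j w j.
have w_le_W j : w j <= W by rewrite /W (bigD1 j) //= lerDl sumr_ge0.
have epsW1 : eps * W <= 1 by apply: le_trans eps_small _; lra.
pose y := fun b : E => 1 - eps * w (enum_rank b).
have y01 : in01 y.
  move=> b; rewrite /y.
  have : eps * w (enum_rank b) <= eps * W by rewrite ler_wpM2l // ltW.
  have : 0 <= eps * w (enum_rank b) by rewrite mulr_ge0 // ltW.
  move=> h1 h2; apply/andP; split; lra.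
apply: (Qfix_le_supersolution q01 y01) => a.
have [_ _ quad] := Fmap_bounds q01 a y01; apply: le_trans quad _.
rewrite feeds_sumE.
set i := enum_rank a.
have -> : \sum_(j < n) BTdiag q i j * (1 - y (enum_val j)) =
          eps * \sum_(j < n) BTdiag q i j * w j.
  by rewrite mulr_sumr; apply: eq_bigr => j _; rewrite /y enum_valK; ring.
set s := \sum_(j < n) BTdiag q i j * w j.
have Aq_ge0 := BTdiag_ge0 (in01_ge0 q01).
have s_le_W : s <= W.
  apply: ler_sum => j _; apply: ler_piMl => //.
  rewrite mxE; have /andP[_ q1] := q01 (enum_val j).
  by rewrite /hashimoto; case: (_ && _); rewrite ?mul1r ?mul0r.
have s0 : 0 <= s by rewrite sumr_ge0 // => j _; rewrite mulr_ge0.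
set S := eps * s.
have S0 : 0 <= S by rewrite mulr_ge0 // ltW.
have S_small : S <= 1 - c^-1 by apply: le_trans eps_small; rewrite ler_wpM2l // ltW.
have S_ge : c * (eps * w i) <= S by rewrite /S mulrCA ler_wpM2l // ltW.
have h1 : S * c^-1 <= S * (1 - S) by rewrite ler_wpM2l //; lra.
have h2 : eps * w i <= S * c^-1.
  by rewrite -[eps * w i]mul1r -icc -mulrA mulrC ler_wpM2r // ltW.
rewrite /y -/i; nra.
Qed.

Lemma supercritical_Qfix_bound (q0 : E -> R) (w : 'I_n -> R) (c0 : R) :
  1 < c0 -> (forall j, 0 <= w j) -> (forall b, 0 <= q0 b) ->
  (forall i, c0 * w i <= \sum_j BTdiag q0 i j * w j) ->
  exists2 eta : R, 0 < eta & exists2 eps : R, 0 < eps &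
    forall q : E -> R, in01 q -> (forall b, (1 - eta) * q0 b <= q b) ->
    forall a, Qfix q a <= 1 - eps * w (enum_rank a).
Proof.
move=> c01 w0 q00 subinv0.
pose c := (1 + c0) / 2.
have c1 : 1 < c by rewrite /c; lra.
pose eta := (c0 - 1) / (2 * c0).
have eta0 : 0 < eta by rewrite /eta divr_gt0 ?subr_gt0 // mulr_gt0 //; lra.
have eta_c : (1 - eta) * c0 = c by rewrite /eta /c; field; rewrite gt_eqF //; lra.
have eta1 : 0 <= 1 - eta by rewrite -(ler_pM2r (_ : 0 < c0)) ?mul0r ?eta_c; lra.
have ic1 : c^-1 < 1 by rewrite invf_lt1 // (lt_trans ltr01 c1).
pose eps := (1 - c^-1) / (\sum_j w j + 1).
have W0 : 0 <= \sum_j w j by rewrite sumr_ge0.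
have eps0 : 0 < eps by rewrite /eps divr_gt0 // ?subr_gt0 // ltr_wpDl.
exists eta => //; exists eps => // q q01 hq.
apply: (Qfix_le_of_subinvariant q01 c1 eps0 w0) => [|i].
- rewrite /eps mulrAC ler_pdivrMr ?ltr_wpDl //.
  by rewrite ler_wpM2l ?subr_ge0 ?ltW //; lra.
- rewrite -eta_c -mulrA; apply: le_trans (ler_wpM2l eta1 (subinv0 i)) _.
  rewrite mulr_sumr; apply: ler_sum => j _; rewrite mulrA.
  by apply: ler_wpM2r => //; rewrite !mxE mulrCA ler_wpM2l // /hashimoto ler0n.
Qed.

End Supercritical.

Section Continuity.
Variable R : realType.

Lemma uniform_ratio_near (I : finType) (f : R -> I -> R) (D : set R) (x eta : R) :
  (forall i, f l i @[l --> within D (nbhs x)] --> f x i) ->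
  (forall i, 0 < f x i) -> 0 < eta ->
  exists2 d : R, 0 < d &
    forall l, D l -> `|x - l| < d -> forall i, `|f x i - f l i| < eta * f x i.
Proof.
move=> f_cvg f_pos eta0.
have : \forall l \near within D (nbhs x), forall i, `|f x i - f l i| < eta * f x i.
  apply: filter_forall => i.
  by have /cvgrPdist_lt := f_cvg i; apply; rewrite mulr_gt0.
by rewrite /within /= => /nbhs_ballP [d d0 hd]; exists d => // l Dl hl; apply: hd.
Qed.

Lemma within_dnbhs_ball (f : R -> R) (D : set R) (x L e : R) :
  f @ within D x^' --> L -> 0 < e ->
  exists2 d : R, 0 < d & forall y, D y -> y != x -> `|x - y| < d -> `|L - f y| < e.
Proof.
move=> /cvgrPdist_lt /[apply]; rewrite /within /= => /nbhs_ballP [d d0 hd].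
by exists d => // y Dy yx hxy; apply: hd.
Qed.

Lemma unit_interval_punctured (x d : R) : x \in `[0, 1[ -> 0 < d ->
  exists y, [/\ y \in `[0, 1], y != x & `|x - y| < d].
Proof.
rewrite !in_setE /= !in_itv /= => /andP[x0 x1] d0.
pose h := Num.min d (1 - x) / 2.
have hd : Num.min d (1 - x) <= d by rewrite ge_min lexx.
have hx : Num.min d (1 - x) <= 1 - x by rewrite ge_min lexx orbT.
have h0 : 0 < Num.min d (1 - x) by rewrite lt_min d0 subr_gt0.
exists (x + h); split.
- by rewrite in_setE /= in_itv /=; apply/andP; split; rewrite /h; lra.
- by apply/eqP; rewrite /h; lra.
- by rewrite opprD addrA subrr sub0r normrN ger0_norm /h; lra.
Qed.

End Continuity.

Section Parametrised.
Variables (R : realType) (V : finType) (G : rel V).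
Local Notation E := (edge G).
Variables (p : R -> E -> R) (lc : R).
Hypothesis p_cont : forall a, {within `[0, 1], continuous (fun l => p l a)}.
Hypothesis p_range : forall l, l \in `[0, 1] -> forall a, 0 < p l a <= 1.
Hypothesis lc01 : lc \in `[0, 1].

Lemma p_in01 l : l \in `[0, 1] -> in01 (p l).
Proof. by move=> l01 a; have /andP[/ltW -> ->] := p_range l01 a. Qed.

Lemma p_ratio_near (eta : R) : 0 < eta ->
  exists2 d : R, 0 < d & forall l, l \in `[0, 1] -> `|lc - l| < d ->
    forall b, `|p lc b - p l b| < eta * p lc b.
Proof.
move=> eta0.
have p_cvg b : p l b @[l --> within `[0, 1] (nbhs lc)] --> p lc b.
  have lc_in : `[0, 1] lc by rewrite -in_setE.
  by move: (@p_cont b) => /subspace_continuousP; apply.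
have [d d0 hd] := uniform_ratio_near p_cvg (fun b => proj1 (andP (p_range lc01 b))) eta0.
by exists d => // l l01 hl; apply: hd => //; rewrite -in_setE.
Qed.

Lemma subcritical_near : spectral_radius (BTdiag (p lc)) < 1 ->
  exists2 d : R, 0 < d & forall l, l \in `[0, 1] -> `|lc - l| < d ->
    Qfix (p l) = (fun _ => 1).
Proof.
move=> rho_lt1.
have [eta eta0 one] := subcritical_Qfix_one (in01_ge0 (p_in01 lc01))
  (spectral_radius_lt1_powers_vanishing rho_lt1).
have [d d0 close] := p_ratio_near eta0.
exists d => // l l01 hl; apply: one => [|b]; first exact: p_in01.
by have := close l l01 hl b; rewrite ltr_distlC mulrDl mul1r => /andP[_]; lra.
Qed.

Lemma supercritical_near : 1 < spectral_radius (BTdiag (p lc)) ->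
  exists a : E, exists2 eps : R, 0 < eps & exists2 d : R, 0 < d &
    forall l, l \in `[0, 1] -> `|lc - l| < d -> Qfix (p l) a <= 1 - eps.
Proof.
move=> rho_gt1.
have plc_ge0 := in01_ge0 (p_in01 lc01).
have [c [w [c1 w0 [j0 wj0] subinv]]] :=
  subinvariant_vector (BTdiag_ge0 plc_ge0) rho_gt1.
have [eta eta0 [eps eps0 bound]] := supercritical_Qfix_bound c1 w0 plc_ge0 subinv.
have [d d0 close] := p_ratio_near eta0.
exists (enum_val j0), (eps * w j0); first by rewrite mulr_gt0.
exists d => // l l01 hl; rewrite -[in X in _ - X](enum_valK j0).
apply: bound => [|b]; first exact: p_in01.
by have := close l l01 hl b; rewrite ltr_distlC mulrBl mul1r => /andP[]; lra.
Qed.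

End Parametrised.

Theorem lemma3 (R : realType) (V : finType) (G : rel V)
    (p : R -> edge G -> R) (lc : R) (ln : nat -> R) :
  hashimoto_irreducible R G ->
  (forall a : edge G, {within `[0, 1], continuous (fun l => p l a)}) ->
  (forall l, l \in `[0, 1] -> forall a, 0 < p l a <= 1) ->
  lc \in `[0, 1[ ->
  (forall a : edge G,
     (fun l => Qfix (p l) a) @ within (fun l => l \in `[0, 1]) lc^' --> (1 : R)) ->
  (forall n, ln n \in `[0, 1]) ->
  ln @ \oo --> lc ->
  (forall n, Qfix (p (ln n)) <> (fun _ => 1)) ->
  spectral_radius (BTdiag (p lc)) = 1.
Proof.
move=> _ p_cont p_range lc_lt1 Q_to1 ln01 ln_lc Qln.
have lc01 : lc \in `[0, 1].
  by move: lc_lt1; rewrite !in_setE /= !in_itv /= => /andP[-> /ltW].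
case: (ltgtP (spectral_radius (BTdiag (p lc))) 1) => // [rho_lt1|rho_gt1].
-
  have [d d0 one] := subcritical_near p_cont p_range lc01 rho_lt1.
  have /cvgrPdist_lt/(_ d d0) [N _ hN] := ln_lc.
  by case: (Qln N); apply: one (ln01 N) (hN N (leqnn N)).
-
  have [a [eps eps0 [d d0 bounded]]] := supercritical_near p_cont p_range lc01 rho_gt1.
  have [d' d'0 near1] := within_dnbhs_ball (Q_to1 a) eps0.
  have dd'0 : 0 < Num.min d d' by rewrite lt_min d0 d'0.
  have [l [l01 l_ne hl]] := unit_interval_punctured lc_lt1 dd'0.
  move: hl; rewrite lt_min => /andP[hld hld'].
  have := bounded l l01 hld; have := near1 l l01 l_ne hld'.
  by rewrite ltr_distlC => /andP[+ _]; lra.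
Qed.
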